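(* Let $R$ be a unital amenable affine algebra over a field $K$, with a fixed Følner exhaustion $\{W_n\}_{n\ge1}$ and a fixed ultralimit $\lim_\omega$. For a finitely generated left $R$-module $M=\sum_{i=1}^r Rx_i$, the quantity $$\mathrm{rank}(M)=\lim_\omega\frac{\dim_K(W_nx_1+\cdots+W_nx_r)}{\dim_K(W_n)}$$ does not depend on the choice of the generating set $\{x_1,\dots,x_r\}$ of $M$. Moreover, $\mathrm{rank}(M)$ is at most the minimal number of elements generating $M$ as an $R$-module.
   Context: An affine algebra is a finitely generated associative algebra over $K$. A Følner exhaustion is a sequence of finite-dimensional $K$-subspaces $W_1\subseteq W_2\subseteq\cdots$ with $\bigcup_nW_n=R$ such that for every $r\in R$, $\lim_{n\to\infty}\dim_K(W_nr+W_n)/\dim_K(W_n)=1$; $R$ is amenable if one exists. $\omega$ is an ultrafilter on $\mathbb N$ and $\lim_\omega:\ell^\infty(\mathbb N)\to\mathbb R$ the corresponding linear functional with $\liminf a_n\le\lim_\omega a_n\le\limsup a_n$, agreeing with the usual limit on convergent sequences. $W_nx=\{wx:w\in W_n\}$. *)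

From HB Require Import structures.
From mathcomp Require Import all_boot all_order all_algebra.
From mathcomp Require Import all_classical all_reals all_analysis.
Set Implicit Arguments. Unset Strict Implicit. Unset Printing Implicit Defensive.
Import Order.TTheory GRing.Theory Num.Theory numFieldNormedType.Exports.
Local Open Scope classical_set_scope.
Local Open Scope ring_scope.

Section LinAlg.
(* A K-vector space structure on an additive group V given by an explicit
   scalar action [act] (used both for R, with k *: r, and for an R-module M,
   with (k%:A) *: m). *)
Variables (K : fieldType) (V : zmodType) (act : K -> V -> V).

Definition lincomb (s : seq V) (c : nat -> K) : V :=
  \sum_(i < size s) act (c i) s`_i.

Definition span_act (s : seq V) : set V :=
  [set v | exists c, v = lincomb s c].

Definition free_act (s : seq V) : Prop :=
  forall c, lincomb s c = 0 -> forall i, (i < size s)%N -> c i = 0.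

Definition has_dim (W : set V) (n : nat) : Prop :=
  exists s, size s = n /\ free_act s /\ span_act s = W.

(* dim_K W (junk value 0 if W is not a finite-dimensional subspace) *)
Definition dim_act (W : set V) : nat := xget 0%N [set n | has_dim W n].

Definition subspace_act (W : set V) : Prop :=
  W 0 /\ (forall u v, W u -> W v -> W (u + v)) /\
  (forall k v, W v -> W (act k v)).

Definition findim_subspace (W : set V) : Prop :=
  subspace_act W /\ exists n, has_dim W n.
End LinAlg.

Section Algebra.
Variables (K : fieldType) (R : algType K).

Definition scaleK (k : K) (r : R) : R := k *: r.

Definition affine_algebra : Prop :=
  exists g : seq R, forall S : set R,
    S 1 -> (forall u v, S u -> S v -> S (u + v)) ->
    (forall u v, S u -> S v -> S (u * v)) ->
    (forall k u, S u -> S (k *: u)) ->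
    (forall x, x \in g -> S x) -> S = setT.

Definition dimR (W : set R) : nat := dim_act scaleK W.

Definition WrW (W : set R) (r : R) : set R :=
  [set v | exists w1 w2, W w1 /\ W w2 /\ v = w1 * r + w2].

Definition folner_exhaustion (Rr : realType) (W : nat -> set R) : Prop :=
  (forall n, findim_subspace scaleK (W n)) /\
  (forall n, W n `<=` W n.+1) /\
  (\bigcup_n W n = setT) /\
  (forall r : R, (fun n => (dimR (WrW (W n) r))%:R / (dimR (W n))%:R : Rr)
                   @ \oo --> (1 : Rr)).

Variable (M : lmodType R).

Definition scaleKM (k : K) (m : M) : M := (k%:A) *: m.

Definition dimM (U : set M) : nat := dim_act scaleKM U.

Definition generates (xs : seq M) : Prop :=
  forall m : M, exists c : nat -> R, m = \sum_(i < size xs) c i *: xs`_i.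

Definition Wspan (W : set R) (xs : seq M) : set M :=
  [set m | exists w : nat -> R, (forall i, (i < size xs)%N -> W (w i)) /\
                        m = \sum_(i < size xs) w i *: xs`_i].

Definition rank_wrt (Rr : realType) (W : nat -> set R) (om : set_system nat)
  (xs : seq M) : Rr :=
  lim ((fun n => (dimM (Wspan (W n) xs))%:R / (dimR (W n))%:R : Rr) @ om).
End Algebra.

(* If y_j = sum_i c_ji x_i, then W y_j lies in sum_i (W c_ji) x_i, and each W c
   lies in W + E_c where E_c spans a complement of W in W c + W.  Hence
     dim (W ys) <= dim (W xs) + #xs * sum_c (dim (W c + W) - dim W),
   and after division by dim W the Folner condition makes the error term
   vanish.  So the two ratio sequences differ by a null sequence and have the
   same ultralimit; the bound comes from dim (W xs) <= #xs * dim W. *)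

From HB Require Import structures.
From mathcomp Require Import all_boot all_order all_algebra.
From mathcomp Require Import all_classical all_reals all_analysis.
From mathcomp Require Import lra.
Import Order.TTheory GRing.Theory Num.Theory numFieldNormedType.Exports.
Local Open Scope classical_set_scope.
Local Open Scope ring_scope.
Set Implicit Arguments. Unset Strict Implicit. Unset Printing Implicit Defensive.

Class vector_action (K : fieldType) (V : zmodType) (act : K -> V -> V) : Prop := {
  actA : forall a b v, act a (act b v) = act (a * b) v;
  act1 : forall v, act 1 v = v;
  actDl : forall a b v, act (a + b) v = act a v + act b v;
  actDr : forall a u v, act a (u + v) = act a u + act a v }.

Section VectorAction.
Context {K : fieldType} {V : zmodType} {act : K -> V -> V} {actP : vector_action act}.

Local Notation lc := (lincomb act).
Local Notation span := (span_act act).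
Local Notation free := (free_act act).
Local Notation dim := (dim_act act).

Lemma act0 v : act 0 v = 0.
Proof. by apply: (addrI (act 0 v)); rewrite -actDl !addr0. Qed.

Lemma actr0 a : act a 0 = 0.
Proof. by apply: (addrI (act a 0)); rewrite -actDr !addr0. Qed.

Lemma actN1 v : act (-1) v = - v.
Proof. by apply/eqP; rewrite -addr_eq0 -{2}(act1 v) -actDl addNr act0. Qed.

Lemma act_sumr a I (r : seq I) (P : pred I) F :
  act a (\sum_(i <- r | P i) F i) = \sum_(i <- r | P i) act a (F i).
Proof. exact: (big_morph _ (actDr a) (actr0 a)). Qed.

Lemma act_suml v I (r : seq I) (P : pred I) F :
  act (\sum_(i <- r | P i) F i) v = \sum_(i <- r | P i) act (F i) v.
Proof. exact: (big_morph (act^~ v) (fun a b => actDl a b v) (act0 v)). Qed.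

Lemma lincomb_ext s c d :
  (forall i, (i < size s)%N -> c i = d i) -> lc s c = lc s d.
Proof. by move=> cd; apply: eq_bigr => i _; rewrite cd. Qed.

Lemma lincomb_cons x s c : lc (x :: s) c = act (c 0%N) x + lc s (c \o succn).
Proof.
by rewrite /lincomb big_ord_recl; congr (_ + _); apply: eq_bigr => i _; rewrite lift0.
Qed.

Lemma lincomb_cat s t c : lc (s ++ t) c = lc s c + lc t (fun i => c (size s + i)%N).
Proof.
elim: s c => [|x s IHs] c; first by rewrite /lincomb big_ord0 add0r.
by rewrite cat_cons !lincomb_cons IHs addrA.
Qed.

Lemma lincombD s c d : lc s (fun i => c i + d i) = lc s c + lc s d.
Proof. by rewrite -big_split; apply: eq_bigr => i _; rewrite actDl. Qed.

Lemma lincombZ a s c : act a (lc s c) = lc s (fun i => a * c i).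
Proof. by rewrite act_sumr; apply: eq_bigr => i _; rewrite actA. Qed.

Lemma span_subspace s : subspace_act act (span s).
Proof.
split; first by exists (fun=> 0); rewrite /lincomb big1 // => i _; rewrite act0.
split=> [_ _ [c ->] [d ->]|a _ [c ->]]; first by exists (fun i => c i + d i); rewrite lincombD.
by exists (fun i => a * c i); rewrite lincombZ.
Qed.

Lemma span0 s : span s 0.
Proof. by case: (span_subspace s). Qed.

Lemma spanD s u v : span s u -> span s v -> span s (u + v).
Proof. by have [_ [spanD _]] := span_subspace s; apply: spanD. Qed.

Lemma spanZ s a v : span s v -> span s (act a v).
Proof. by have [_ [_ spanZ]] := span_subspace s; apply: spanZ. Qed.

Lemma subspace_sum (S : set V) I (r : seq I) (P : pred I) F :
  subspace_act act S -> (forall i, P i -> S (F i)) -> S (\sum_(i <- r | P i) F i).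
Proof. by case=> S0 [SD _] SF; apply: big_ind. Qed.

Lemma span_mem s i : (i < size s)%N -> span s s`_i.
Proof.
move=> lt_is; exists (fun j => (j == i)%:R); rewrite /lincomb (bigD1 (Ordinal lt_is)) //=.
rewrite eqxx act1 big1 ?addr0 // => j neq_ji.
by rewrite -[_ == i]/(j == Ordinal lt_is) (negbTE neq_ji) act0.
Qed.

Lemma span_mem_seq s x : x \in s -> span s x.
Proof. by move=> sx; rewrite -(nth_index 0 sx); apply: span_mem; rewrite index_mem. Qed.

Lemma span_min (S : set V) s :
  subspace_act act S -> (forall i, (i < size s)%N -> S s`_i) -> span s `<=` S.
Proof. by move=> [S0 [SD SZ]] Ss _ [c ->]; apply: big_ind => // i _; apply/SZ/Ss. Qed.

Lemma span_sub t s : (forall i, (i < size t)%N -> span s t`_i) -> span t `<=` span s.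
Proof. by apply: span_min; apply: span_subspace. Qed.

Lemma span_subseq t s : {subset t <= s} -> span t `<=` span s.
Proof. by move=> ts; apply: span_sub => i /(mem_nth 0)/ts/span_mem_seq. Qed.

Lemma span_cat s t v :
  span (s ++ t) v <-> exists u w, [/\ span s u, span t w & v = u + w].
Proof.
split=> [[c ->]|[_ [_ [[c ->] [d ->] ->]]]].
  by rewrite lincomb_cat; do 2!eexists; split; eexists.
exists (fun i => if (i < size s)%N then c i else d (i - size s)%N).
rewrite lincomb_cat; congr (_ + _); apply: lincomb_ext => i /= lt_is.
  by rewrite lt_is.
by rewrite ltnNge leq_addr addKn.
Qed.

Lemma span_cons_mem x s : span s x -> span (x :: s) = span s.
Proof.
move=> sx; apply/seteqP; split; last by apply: span_subseq => y sy; rewrite inE sy orbT.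
by apply: span_sub => -[|i] //= /span_mem.
Qed.

Lemma eq_span_cat t s s' : span s = span s' -> span (t ++ s) = span (t ++ s').
Proof.
move=> ss'; apply/seteqP; split=> v /span_cat [u [w [tu sw ->]]];
  apply/span_cat; exists u, w; split=> //.
  by rewrite -ss'.
by rewrite ss'.
Qed.

Lemma free_nil : free [::].
Proof. by []. Qed.

Lemma free_cons x s : free s -> ~ span s x -> free (x :: s).
Proof.
move=> fs sNx c; rewrite lincomb_cons => /eqP; rewrite addr_eq0 => /eqP cx.
have c0 : c 0%N = 0.
  apply: contra_notP sNx => /eqP c0_neq0.
  rewrite -[x]act1 -(mulVf c0_neq0) -actA cx -actN1.
  by apply/spanZ/spanZ; eexists.
move: cx; rewrite c0 act0 => /esym/eqP; rewrite oppr_eq0 => /eqP/fs fsc.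
by case=> [|i] //= /fsc.
Qed.

(* The coefficient matrix of [t] over [s] is row-free because [t] is free, so
   its rank [size t] is at most its width [size s]. *)
Lemma steinitz t s :
  free t -> (forall j, (j < size t)%N -> span s t`_j) -> (size t <= size s)%N.
Proof.
move=> ft ts.
have /choice[a ta] : forall j, exists a, (j < size t)%N -> t`_j = lc s a.
  move=> j; case: ltnP => [/ts[a ->]|_]; first by exists a.
  by exists (fun=> 0).
pose A : 'M[K]_(size t, size s) := \matrix_(j, i) a j i.
suff /eqP <- : row_free A by apply: rank_leq_col.
apply: inj_row_free => v vA0; apply/rowP => k; rewrite mxE.
pose c j := if insub j is Some k then v 0 k else 0.
have cE (k' : 'I_(size t)) : c k' = v 0 k' by rewrite /c valK.
rewrite -cE; apply: ft (ltn_ord k); rewrite /lincomb.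
under eq_bigr => k' _ do rewrite cE ta // lincombZ.
rewrite exchange_big big1 // => i _; rewrite -act_suml.
have /rowP/(_ i) := vA0; rewrite !mxE; under eq_bigr do rewrite mxE.
by move=> ->; rewrite act0.
Qed.

Lemma has_dim_uniq A n m : has_dim act A n -> has_dim act A m -> n = m.
Proof.
move=> [b [<- [fb sb]]] [b' [<- [fb' sb']]]; apply/eqP; rewrite eqn_leq.
by apply/andP; split; apply: steinitz => // j /span_mem; rewrite ?sb ?sb' -?sb -?sb'.
Qed.

Lemma dim_actE A n : has_dim act A n -> dim A = n.
Proof. by move=> An; apply: xget_unique => // m /has_dim_uniq; apply. Qed.

Lemma dim_free s : free s -> dim (span s) = size s.
Proof. by move=> fs; apply: dim_actE; exists s. Qed.

Lemma extend_basis t b : free b ->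
  exists e, [/\ free (e ++ b), span (e ++ b) = span (t ++ b) & (size e <= size t)%N].
Proof.
move=> fb; elim: t => [|x t [e [feb eb le_et]]]; first by exists [::].
have [ebx|ebNx] := pselect (span (e ++ b) x).
  by exists e; split; rewrite // ?(leqW le_et) // cat_cons span_cons_mem -eb.
by exists (x :: e); split; rewrite //= ?(eq_span_cat [:: x] eb) //; apply: free_cons.
Qed.

Lemma exists_basis s : exists2 b, free b & span b = span s.
Proof.
by have [b []] := extend_basis s free_nil; rewrite !cats0 => fb bs _; exists b.
Qed.

Lemma dim_cat t s : (dim (span (t ++ s)) <= size t + dim (span s))%N.
Proof.
have [b fb bs] := exists_basis s; have [e [feb eb le_et]] := extend_basis t fb.
by rewrite -(eq_span_cat t bs) -eb -bs !dim_free // size_cat leq_add2r.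
Qed.

Lemma dim_span_le s : (dim (span s) <= size s)%N.
Proof. by have := dim_cat s [::]; rewrite cats0 (dim_free free_nil) addn0. Qed.

Lemma dim_le A t : A `<=` span t -> (dim A <= dim (span t))%N.
Proof.
move=> At; have [[_ [a [_ [fa aA]]]]|An] := pselect (exists n, has_dim act A n).
  have [b fb bt] := exists_basis t; rewrite -aA -bt !dim_free //.
  by apply: steinitz => // j /span_mem; rewrite aA bt => /At.
(* otherwise [dim A] is the junk value 0 *)
by rewrite /dim_act xgetPN // => n An'; apply: An; exists n.
Qed.

End VectorAction.

#[export] Instance scaleK_vector_action (K : fieldType) (R : algType K) :
  vector_action (@scaleK K R).
Proof. by split=> *; rewrite /scaleK ?scalerA ?scale1r ?scalerDl ?scalerDr. Qed.

#[export] Instance scaleKM_vector_action (K : fieldType) (R : algType K) (M : lmodType R) :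
  vector_action (@scaleKM K R M).
Proof.
split=> *; rewrite /scaleKM ?scalerDl ?scalerDr ?scale1r //.
by rewrite scalerA mulr_algl scalerA.
Qed.

Section ModuleOverAlgebra.
Variables (K : fieldType) (R : algType K) (M : lmodType R).

Local Notation spanR := (span_act (@scaleK K R)).
Local Notation spanM := (span_act (@scaleKM K R M)).
Local Notation lcR := (lincomb (@scaleK K R)).
Local Notation freeR := (free_act (@scaleK K R)).

Lemma scaleKM_scale k (w : R) (x : M) : scaleKM k (w *: x) = (k *: w) *: x.
Proof. by rewrite /scaleKM scalerA mulr_algl. Qed.

Lemma lincomb_mulr (b : seq R) c k :
  lcR [seq w * c | w <- b] k = lcR b k * c.
Proof.
rewrite /lincomb size_map mulr_suml; apply: eq_bigr => i _.
by rewrite (nth_map 0) // /scaleK scalerAl.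
Qed.

Lemma WrW_span (b : seq R) c : WrW (spanR b) c = spanR ([seq w * c | w <- b] ++ b).
Proof.
apply/seteqP; split=> v.
  move=> [w1 [w [[k ->] [bw ->]]]]; apply/span_cat; exists (lcR b k * c), w.
  by split=> //; exists k; rewrite lincomb_mulr.
move=> /span_cat [u [w [[k ->] bw ->]]]; exists (lcR b k), w.
by rewrite lincomb_mulr; split=> //; exists k.
Qed.

Lemma Wspan_subspace (U : set R) (xs : seq M) :
  subspace_act (@scaleK K R) U -> subspace_act (@scaleKM K R M) (Wspan U xs).
Proof.
move=> [U0 [UD UZ]]; split; [|split].
- by exists (fun=> 0); split=> //; rewrite big1 // => i _; rewrite scale0r.
- move=> u v [w [Uw ->]] [w' [Uw' ->]]; exists (fun i => w i + w' i).
  split=> [i lt_i|]; first by apply: UD; [apply: Uw|apply: Uw'].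
  by rewrite -big_split; apply: eq_bigr => i _; rewrite scalerDl.
- move=> k v [w [Uw ->]]; exists (fun i => k *: w i).
  split=> [i /Uw|]; first exact: UZ.
  by rewrite /scaleKM scaler_sumr; apply: eq_bigr => i _; apply: scaleKM_scale.
Qed.

Lemma Wspan_scale_mem (U : set R) (xs : seq M) w i :
  U 0 -> U w -> (i < size xs)%N -> Wspan U xs (w *: xs`_i).
Proof.
move=> U0 Uw lt_i; exists (fun j => if j == i then w else 0).
split=> [j _|]; first by case: ifP.
rewrite (bigD1 (Ordinal lt_i)) //= eqxx big1 ?addr0 // => j neq_ji.
by rewrite -[_ == i]/(j == Ordinal lt_i) (negbTE neq_ji) scale0r.
Qed.

Lemma Wspan_span (b : seq R) (xs : seq M) :
  Wspan (spanR b) xs = spanM [seq w *: x | w <- b, x <- xs].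
Proof.
apply/seteqP; split=> v.
  move=> [w [bw ->]]; apply: subspace_sum (span_subspace _) _ => i _.
  have [k ->] := bw i (ltn_ord i); rewrite scaler_suml.
  apply: subspace_sum (span_subspace _) _ => j _.
  rewrite /scaleK -scaleKM_scale; apply/spanZ/span_mem_seq.
  by apply: allpairs_f; apply: mem_nth.
apply: span_min; first by apply/Wspan_subspace/span_subspace.
move=> i /(mem_nth 0)/allpairsP[[w x] [/= bw xsx ->]].
rewrite -(nth_index 0 xsx); apply: Wspan_scale_mem; rewrite ?index_mem //.
  exact: span0.
exact: span_mem_seq.
Qed.

Lemma dimM_Wspan_le (b : seq R) (xs : seq M) :
  (dimM (Wspan (spanR b) xs) <= size xs * size b)%N.
Proof. by rewrite /dimM Wspan_span (leq_trans (dim_span_le _)) // size_allpairs mulnC. Qed.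

Lemma dimR_le_WrW (b : seq R) c : (dimR (spanR b) <= dimR (WrW (spanR b) c))%N.
Proof.
by rewrite /dimR WrW_span; apply/dim_le/span_subseq => w bw; rewrite mem_cat bw orbT.
Qed.

Lemma span_mulr_extension (b cs : seq R) : freeR b -> exists E : seq R,
  (forall c w, c \in cs -> spanR b w -> spanR (E ++ b) (w * c)) /\
  size E = (\sum_(c <- cs) (dimR (WrW (spanR b) c) - size b))%N.
Proof.
move=> fb; elim: cs => [|c cs [E [EbE sizeE]]]; first by exists [::]; rewrite big_nil.
have [e [feb eb _]] := extend_basis [seq w * c | w <- b] fb.
exists (e ++ E); split.
  move=> c' w /predU1P[-> bw|/EbE Ec' /Ec']; last first.
    by apply: span_subseq => y; rewrite !mem_cat => /orP[] ->; rewrite ?orbT.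
  have : WrW (spanR b) c (w * c) by exists w, 0; rewrite addr0; do 2!split=> //; apply: span0.
  rewrite WrW_span -eb; apply: span_subseq => y; rewrite !mem_cat.
  by case/orP => ->; rewrite ?orbT.
rewrite big_cons size_cat sizeE; congr (_ + _)%N.
by rewrite /dimR WrW_span -eb dim_free // size_cat addnK.
Qed.

Lemma Wspan_combination_sub (U V : set R) (xs ys : seq M) (cy : nat -> nat -> R) :
  subspace_act (@scaleK K R) V ->
  (forall j, ys`_j = \sum_(i < size xs) cy j i *: xs`_i) ->
  (forall j i w, (j < size ys)%N -> (i < size xs)%N -> U w -> V (w * cy j i)) ->
  Wspan U ys `<=` Wspan V xs.
Proof.
move=> Vsub ysE UV v [w [Uw ->]].
exists (fun i => \sum_(j < size ys) w j * cy j i); split.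
  by move=> i lt_i; apply: subspace_sum Vsub _ => j _; apply: UV => //; apply: Uw.
under eq_bigr => j _ do rewrite ysE scaler_sumr.
rewrite exchange_big; apply: eq_bigr => i _; rewrite scaler_suml.
by apply: eq_bigr => j _; rewrite scalerA.
Qed.

Lemma dimM_Wspan_generated (xs ys : seq M) : generates xs -> exists cs : seq R,
  forall b, freeR b ->
  (dimM (Wspan (spanR b) ys) <= dimM (Wspan (spanR b) xs) +
     size xs * \sum_(c <- cs) (dimR (WrW (spanR b) c) - size b))%N.
Proof.
move=> gx; have [cy ysE] := choice (fun j => gx ys`_j).
pose cs := [seq cy j i | j <- iota 0 (size ys), i <- iota 0 (size xs)].
exists cs => b fb; have [E [EbE sizeE]] := span_mulr_extension cs fb.
have : Wspan (spanR b) ys `<=` Wspan (spanR (E ++ b)) xs.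
  apply: Wspan_combination_sub ysE _ => [|j i w lt_j lt_i bw]; first exact: span_subspace.
  by apply: EbE bw; apply: allpairs_f; rewrite mem_iota.
rewrite (Wspan_span (E ++ b)) allpairs_cat => /dim_le/leq_trans; apply.
by rewrite (leq_trans (dim_cat _ _)) // -Wspan_span size_allpairs sizeE addnC mulnC.
Qed.

End ModuleOverAlgebra.

Section Ultralimit.
Variables (T : Type) (F : set_system T) (Rr : realType).

Lemma lim_eq_sub_cvg0 {FF : Filter F} (f g : T -> Rr) :
  (g - f) @ F --> 0 -> lim (f @ F) = lim (g @ F).
Proof.
move=> gf0; rewrite /lim /lim_in; congr get; apply/funext => l; apply/propext.
split; first exact: cvg_sub0.
by apply: cvg_sub0; rewrite -opprB -oppr0; apply: cvgN.
Qed.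

Lemma lim_le_cst {FF : ProperFilter F} (f : T -> Rr) c :
  0 <= c -> (forall t, f t <= c) -> lim (f @ F) <= c.
Proof.
move=> c_ge0 fc; have [f_cvg|f_dvg] := pselect (cvg (f @ F)).
  by apply: limr_le => //; apply: nearW.
(* the limit of a divergent function is the junk value [point = 0] *)
by rewrite dvgP.
Qed.

End Ultralimit.

Section Folner.
Variables (K : fieldType) (R : algType K) (M : lmodType R) (Rr : realType).
Variable W : nat -> set R.
Hypothesis WF : folner_exhaustion Rr W.

Local Notation spanR := (span_act (@scaleK K R)).

Definition rank_ratio (xs : seq M) n : Rr :=
  (dimM (Wspan (W n) xs))%:R / (dimR (W n))%:R.

Lemma folner_basis n : exists2 b, free_act (@scaleK K R) b & spanR b = W n.
Proof. by have [_ [_ [b [_ [fb bW]]]]] := WF.1 n; exists b. Qed.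

Lemma folner_dim_gt0 : \forall n \near \oo, (0 < dimR (W n))%N.
Proof.
apply: (filterS _ (cvgr_gt _ (WF.2.2.2 0) 0 ltr01)) => n.
by rewrite lt0n; apply: contraTneq => ->; rewrite invr0 mulr0 ltxx.
Qed.

Lemma rank_ratio_le_size xs n : rank_ratio xs n <= (size xs)%:R.
Proof.
rewrite /rank_ratio; have [->|dW_gt0] := posnP (dimR (W n)).
  by rewrite invr0 mulr0.
rewrite ler_pdivrMr ?ltr0n // -natrM ler_nat.
by have [b fb <-] := folner_basis n; rewrite /dimR dim_free //; apply: dimM_Wspan_le.
Qed.

Lemma rank_ratio_le_generated (xs ys : seq M) : generates xs ->
  exists2 e : nat -> Rr, e @ \oo --> 0 &
    \forall n \near \oo, rank_ratio ys n <= rank_ratio xs n + e n.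
Proof.
move=> gx; have [cs dimM_le] := dimM_Wspan_generated ys gx.
pose q n c : Rr := (dimR (WrW (W n) c))%:R / (dimR (W n))%:R.
exists (fun n => (size xs)%:R * \sum_(c <- cs) (q n c - 1)).
  have q1 c : q ^~ c @ \oo --> (1 : Rr) by apply: WF.2.2.2.
  rewrite -[X in _ --> X](mulr0 (size xs)%:R); apply: cvgMl_tmp.
  have := cvg_big (op := +%R) (x0 := 0) (P := xpredT) (r := cs) add_continuous
    eventually_filter (fun c _ => (subr_cvg0 _ _).2 (q1 c)).
  by rewrite big1_eq; apply.
move: folner_dim_gt0; apply: filterS => n dW_gt0.
have [b fb bW] := folner_basis n.
have dW_neq0 : (dimR (W n))%:R != 0 :> Rr by rewrite pnatr_eq0 -lt0n.
have -> : \sum_(c <- cs) (q n c - 1) =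
    (\sum_(c <- cs) (dimR (WrW (W n) c) - dimR (W n)))%:R / (dimR (W n))%:R.
  rewrite natr_sum mulr_suml; apply: eq_bigr => c _.
  have dimW_le : (dimR (W n) <= dimR (WrW (W n) c))%N by rewrite -bW dimR_le_WrW.
  by rewrite natrB // mulrBl divff.
rewrite /rank_ratio mulrA -mulrDl ler_pM2r ?invr_gt0 ?ltr0n // -natrM -natrD ler_nat.
by have := dimM_le b fb; rewrite bW -(dim_free fb) bW.
Qed.

Lemma rank_ratio_sub_cvg0 (xs ys : seq M) : generates xs -> generates ys ->
  (rank_ratio ys - rank_ratio xs) @ \oo --> 0.
Proof.
move=> gx gy.
have [e1 e1_0 le1] := rank_ratio_le_generated ys gx.
have [e2 e2_0 le2] := rank_ratio_le_generated xs gy.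
apply: (squeeze_cvgr (f := - e2) (h := e1)); last exact: e1_0.
  by apply: filterS2 le1 le2 => n h1 h2; rewrite !fctE; apply/andP; split; lra.
by rewrite -oppr0; apply: cvgN.
Qed.

End Folner.

Unset Implicit Arguments.

Theorem proposition7 (K : fieldType) (R : algType K) (Rr : realType)
  (W : nat -> set R) (om : set_system nat) (M : lmodType R) (xs ys : seq M) :
  affine_algebra R ->
  folner_exhaustion Rr W ->
  UltraFilter om -> (\oo : set_system nat) `<=` om ->
  generates xs -> generates ys ->
  rank_wrt Rr W om xs = rank_wrt Rr W om ys /\
  rank_wrt Rr W om xs <= (size ys)%:R.
Proof.
move=> _ WF om_ultra oo_om gx gy.
have ratio_om : (rank_ratio Rr W ys - rank_ratio Rr W xs) @ om --> 0.
  by move=> A /(rank_ratio_sub_cvg0 WF gx gy); apply: oo_om.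
have rank_eq : rank_wrt Rr W om xs = rank_wrt Rr W om ys.
  exact: lim_eq_sub_cvg0 ratio_om.
split=> //; rewrite rank_eq; apply: lim_le_cst => // n.
exact: rank_ratio_le_size.
Qed.
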